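(* Let $\mathcal{H}$ be a reproducing kernel Hilbert space of functions on a set $X$, with multiplier algebra $\mathcal{M}(\mathcal{H})$. Let $(\phi_n)_{n\ge1}$ be a sequence of elements of the closed unit ball of $\mathcal{M}(\mathcal{H})$. Put $\Phi_0=1$ and $\Phi_n:=\phi_1\phi_2\cdots\phi_n$ for $n\ge1$. Assume that $\lim_{n\to\infty}\Phi_n(x)=0$ for every $x\in X$. Then for every $f\in\mathcal{H}$, \[ f=\sum_{n=1}^{\infty}\Phi_{n-1}\cdot Q_{\phi_n}M_{\Phi_{n-1}}^{*}f, \] where the series converges in the norm of $\mathcal{H}$.
   Context: For a multiplier $\phi\in\mathcal{M}(\mathcal{H})$, $M_\phi:\mathcal{H}\to\mathcal{H}$ denotes the multiplication operator $M_\phi g=\phi g$, and $M_\phi^*$ its Hilbert space adjoint. The multiplier norm of $\phi$ is the operator norm of $M_\phi$; the closed unit ball of $\mathcal{M}(\mathcal{H})$ consists of the multipliers with $\|M_\phi\|\le 1$. For $\phi\in\mathcal{M}(\mathcal{H})$ define $P_\phi:=M_\phi M_\phi^*$ and $Q_\phi:=I-M_\phi M_\phi^*$, where $I$ is the identity on $\mathcal{H}$. The reproducing kernel of $\mathcal{H}$ at $x\in X$ is denoted $k_x$. *)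

From HB Require Import structures.
From mathcomp Require Import all_boot all_order all_algebra.
From mathcomp Require Import reals.
From mathcomp Require Import complex.
From Stdlib Require Import ClassicalEpsilon.
Import GRing.Theory Num.Theory.
Set Implicit Arguments. Unset Strict Implicit. Unset Printing Implicit Defensive.
Local Open Scope ring_scope.
Local Open Scope complex_scope.

Definition fadd (R : realType) (X : Type) (f g : X -> R[i]) : X -> R[i] :=
  fun x => f x + g x.
Definition fsub (R : realType) (X : Type) (f g : X -> R[i]) : X -> R[i] :=
  fun x => f x - g x.
Definition fmul (R : realType) (X : Type) (f g : X -> R[i]) : X -> R[i] :=
  fun x => f x * g x.
Definition fscale (R : realType) (X : Type) (a : R[i]) (f : X -> R[i]) :
  X -> R[i] := fun x => a * f x.
Definition fzero (R : realType) (X : Type) : X -> R[i] := fun _ => 0.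

Record RKHS (R : realType) (X : Type) := {
  hs : (X -> R[i]) -> Prop;
  ip : (X -> R[i]) -> (X -> R[i]) -> R[i];
  kern : X -> (X -> R[i]);
  hs0 : hs (@fzero R X);
  hsD : forall f g, hs f -> hs g -> hs (fadd f g);
  hsZ : forall a f, hs f -> hs (fscale a f);
  ipD : forall f g h, hs f -> hs g -> hs h ->
          ip (fadd f g) h = ip f h + ip g h;
  ipZ : forall a f g, hs f -> hs g -> ip (fscale a f) g = a * ip f g;
  ip_conj : forall f g, hs f -> hs g -> ip g f = (ip f g)^*;
  ip_ge0 : forall f, hs f -> 0 <= ip f f;
  ip_eq0 : forall f, hs f -> ip f f = 0 -> f = @fzero R X;
  hs_complete : forall u : nat -> X -> R[i], (forall n, hs (u n)) ->
    (forall eps : R, 0 < eps -> exists N, forall m n, (N <= m)%N -> (N <= n)%N ->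
        sqrtC (ip (fsub (u m) (u n)) (fsub (u m) (u n))) < eps%:C) ->
    exists l, hs l /\
      (forall eps : R, 0 < eps -> exists N, forall n, (N <= n)%N ->
        sqrtC (ip (fsub l (u n)) (fsub l (u n))) < eps%:C);
  kern_hs : forall x, hs (kern x);
  reproducing : forall f x, hs f -> f x = ip f (kern x)
}.

Section Ops.
Variables (R : realType) (X : Type) (H : RKHS R X).

Definition hnorm (f : X -> R[i]) : R[i] := sqrtC (ip H f f).

(* phi belongs to the closed unit ball of the multiplier algebra:
   M_phi maps H into H and ||M_phi|| <= 1. *)
Definition mult_ball (phi : X -> R[i]) : Prop :=
  forall g, hs H g -> hs H (fmul phi g) /\ hnorm (fmul phi g) <= hnorm g.

Definition madj (phi : X -> R[i]) (h : X -> R[i]) : X -> R[i] :=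
  epsilon (inhabits (@fzero R X))
    (fun y => hs H y /\ forall g, hs H g -> ip H (fmul phi g) h = ip H g y).

Definition Qop (phi : X -> R[i]) (g : X -> R[i]) : X -> R[i] :=
  fsub g (fmul phi (madj phi g)).

End Ops.

(* With phi i standing for phi_{i+1} (i >= 0):
   Phi phi n = phi_1 * ... * phi_n, Phi phi 0 = 1. *)
Definition Phi (R : realType) (X : Type) (phi : nat -> X -> R[i]) (n : nat) :
  X -> R[i] := fun x => \prod_(i < n) phi i x.

(* Partial sum  sum_{n=1}^{N} Phi_{n-1} * Q_{phi_n} M^*_{Phi_{n-1}} f,
   written with k = n - 1 ranging over 0 <= k < N. *)
Definition psum (R : realType) (X : Type) (H : RKHS R X)
  (phi : nat -> X -> R[i]) (f : X -> R[i]) (N : nat) : X -> R[i] :=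
  fun x => \sum_(k < N)
    fmul (Phi phi k) (Qop H (phi k) (madj H (Phi phi k) f)) x.

(* With g_n := M_{Phi_n}^* f the partial sums telescope, f - s_n = Phi_n g_n,
   because Phi_n Q_{phi_(n+1)} g_n = Phi_n g_n - Phi_(n+1) g_(n+1).  The norms
   ||g_n|| decrease and ||Phi_n g_n - Phi_m g_m||^2 <= ||g_n||^2 - ||g_m||^2 for
   n <= m, so (Phi_n g_n) is Cauchy in H; its limit vanishes at every x because
   |Phi_n(x) g_n(x)| <= |Phi_n(x)| ||f|| ||k_x|| -> 0, hence it is 0.
   The adjoints exist by the Riesz representation theorem, proved by minimizing
   the norm on the affine hyperplane {L = 1}. *)

From mathcomp Require Import all_boot all_order all_algebra.
From mathcomp Require Import boolp classical_sets reals complex.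
From mathcomp Require Import ring lra.
From Stdlib Require Import ClassicalEpsilon.
Import Order.TTheory GRing.Theory Num.Theory.
Local Open Scope ring_scope.
Local Open Scope complex_scope.
Local Open Scope classical_set_scope.
Set Implicit Arguments. Unset Strict Implicit. Unset Printing Implicit Defensive.

Local Notation re := complex.Re.
Local Notation im := complex.Im.

Lemma nonincreasing_cauchy (R : realType) (a : nat -> R) :
  (forall n, 0 <= a n) -> (forall n m, (n <= m)%N -> a m <= a n) ->
  forall d, 0 < d -> exists N, forall n m, (N <= n <= m)%N -> a n - a m < d.
Proof.
move=> a_ge0 a_nonincr d d_gt0.
pose S : set R := [set t | exists n, t = a n].
have S_lb : has_lbound S by exists 0 => t [n ->].
have S_inf : has_inf S by split => //; exists (a 0%N), 0%N.
have [t [N ->] aN_lt] := inf_adherent d_gt0 S_inf.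
exists N => n m /andP[Nn nm].
have inf_le : inf S <= a m by apply: ge_inf => //; exists m.
by have := a_nonincr _ _ Nn; lra.
Qed.

Lemma inv_succ_lt (R : realType) (e : R) :
  0 < e -> exists N, forall n, (N <= n)%N -> n.+1%:R^-1 < e.
Proof.
move=> e_gt0; exists (Num.bound e^-1) => n Nn.
have bound_le : (Num.bound e^-1)%:R <= n.+1%:R :> R by rewrite ler_nat (leq_trans Nn).
have einv_ge0 : 0 <= e^-1 by rewrite invr_ge0 ltW.
have inv_lt := lt_le_trans (archi_boundP einv_ge0) bound_le.
by rewrite -[e]invrK ltf_pV2 ?posrE ?invr_gt0.
Qed.

Section ComplexModulus.
Variable R : realType.
Implicit Types (z w : R[i]).

Definition sqmod z : R := re z ^+ 2 + im z ^+ 2.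

Lemma complexP z w : re z = re w -> im z = im w -> z = w.
Proof. by case: z => ? ?; case: w => ? ? /= -> ->. Qed.

Lemma ge0_complex_real z : 0 <= z -> z = (re z)%:C.
Proof. by case: z => a b; rewrite lecE /= => /andP[/eqP -> _]. Qed.

Lemma sqmod_ge0 z : 0 <= sqmod z.
Proof. by rewrite addr_ge0 // sqr_ge0. Qed.

Lemma sqmod_eq0 z : sqmod z = 0 -> z = 0.
Proof.
rewrite /sqmod => z0; have := sqr_ge0 (re z); have := sqr_ge0 (im z).
by move=> ? ?; apply: complexP; apply/eqP; rewrite -sqrf_eq0; apply/eqP; lra.
Qed.

Lemma sqmodM z w : sqmod (z * w) = sqmod z * sqmod w.
Proof. by case: z w => a b [c d]; rewrite /sqmod /=; ring. Qed.

Lemma mulJc z : conjc z * z = (sqmod z)%:C.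
Proof. by case: z => a b; apply: complexP; rewrite /sqmod /=; ring. Qed.

Lemma sqmodD_le z w : sqmod (z + w) <= 2 * sqmod z + 2 * sqmod w.
Proof.
case: z w => a b [c d]; rewrite /sqmod /=.
by have := sqr_ge0 (a - c); have := sqr_ge0 (b - d); nra.
Qed.

Lemma sqmod_lt z (e : R) : 0 < e -> `|z| < e%:C -> sqmod z < e ^+ 2.
Proof.
move=> e_gt0; rewrite normc_def ltcR -/(sqmod z) => lt_e.
have := sqr_sqrtr (sqmod_ge0 z); have := sqrtr_ge0 (sqmod z).
by move: lt_e; set s := Num.sqrt _ => ? ? <-; nra.
Qed.
End ComplexModulus.

Section InnerProduct.
Variables (R : realType) (X : Type) (H : RKHS R X).
Local Notation hs := (hs H).
Local Notation ip := (ip H).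
Implicit Types (f g h u v w : X -> R[i]).

Lemma fsubE f g : fsub f g = fadd f (fscale (-1) g).
Proof. by apply: funext => x; rewrite /fsub /fadd /fscale mulN1r. Qed.

Lemma hsB f g : hs f -> hs g -> hs (fsub f g).
Proof. by move=> hf hg; rewrite fsubE; apply: hsD => //; apply: hsZ. Qed.

Lemma ipDr f g h : hs f -> hs g -> hs h -> ip f (fadd g h) = ip f g + ip f h.
Proof.
move=> hf hg hh; rewrite (ip_conj (hsD hg hh) hf) ipD //.
by rewrite rmorphD (ip_conj hg hf) (ip_conj hh hf).
Qed.

Lemma ipZr a f g : hs f -> hs g -> ip f (fscale a g) = conjc a * ip f g.
Proof. by move=> hf hg; rewrite (ip_conj (hsZ a hg) hf) ipZ // rmorphM (ip_conj hg hf). Qed.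

Lemma ipBl f g h : hs f -> hs g -> hs h -> ip (fsub f g) h = ip f h - ip g h.
Proof. by move=> hf hg hh; rewrite fsubE ipD ?ipZ ?mulN1r //; apply: hsZ. Qed.

Lemma ipBr f g h : hs f -> hs g -> hs h -> ip f (fsub g h) = ip f g - ip f h.
Proof. by move=> hf hg hh; rewrite fsubE ipDr ?ipZr ?rmorphN1 ?mulN1r //; apply: hsZ. Qed.

Lemma ip0l g : hs g -> ip (@fzero R X) g = 0.
Proof.
move=> hg; have -> : @fzero R X = fsub (@fzero R X) (@fzero R X).
  by apply: funext => x; rewrite /fsub subrr.
by rewrite ipBl ?subrr //; apply: hs0.
Qed.

Lemma ip0r g : hs g -> ip g (@fzero R X) = 0.
Proof. by move=> hg; rewrite ip_conj ?ip0l ?conjc0 //; apply: hs0. Qed.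

Definition sqnorm u : R := re (ip u u).

Lemma ip_sqnorm u : hs u -> ip u u = (sqnorm u)%:C.
Proof. by move=> hu; apply/ge0_complex_real/ip_ge0. Qed.

Lemma sqnorm_ge0 u : hs u -> 0 <= sqnorm u.
Proof. by move=> hu; rewrite -lecR -ip_sqnorm //; apply: ip_ge0. Qed.

Lemma sqnorm_eq0 u : hs u -> sqnorm u = 0 -> u = @fzero R X.
Proof. by move=> hu u0; apply: (ip_eq0 hu); rewrite ip_sqnorm // u0. Qed.

Lemma re_ipC u v : hs u -> hs v -> re (ip v u) = re (ip u v).
Proof. by move=> hu hv; rewrite (ip_conj hu hv); case: (ip u v). Qed.

Lemma re_ipZr a u v : hs u -> hs v ->
  re (ip u (fscale a v)) = re a * re (ip u v) + im a * im (ip u v).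
Proof. by move=> hu hv; rewrite ipZr //; case: a => ? ?; case: (ip u v) => ? ? /=; ring. Qed.

Lemma sqnormD u v : hs u -> hs v ->
  sqnorm (fadd u v) = sqnorm u + sqnorm v + 2 * re (ip u v).
Proof.
move=> hu hv; rewrite /sqnorm ipD ?ipDr //; try by apply: hsD.
by rewrite !raddfD /= re_ipC //; ring.
Qed.

Lemma sqnormB u v : hs u -> hs v ->
  sqnorm (fsub u v) = sqnorm u + sqnorm v - 2 * re (ip u v).
Proof.
move=> hu hv; rewrite /sqnorm ipBl ?ipBr //; try by apply: hsB.
by rewrite !raddfB /= re_ipC //; ring.
Qed.

Lemma sqnormZ a u : hs u -> sqnorm (fscale a u) = sqmod a * sqnorm u.
Proof.
move=> hu; rewrite /sqnorm ipZ ?ipZr //; last exact: hsZ.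
by rewrite mulrA [a * _]mulrC mulJc ip_sqnorm // -rmorphM.
Qed.

Lemma sqnormBC u v : hs u -> hs v -> sqnorm (fsub u v) = sqnorm (fsub v u).
Proof. by move=> hu hv; rewrite !sqnormB // re_ipC //; ring. Qed.

Lemma parallelogram u v : hs u -> hs v ->
  sqnorm (fsub u v) + sqnorm (fadd u v) = 2 * sqnorm u + 2 * sqnorm v.
Proof. by move=> hu hv; rewrite sqnormB // sqnormD //; ring. Qed.

Lemma re_ip_sqr_le u v : hs u -> hs v -> re (ip u v) ^+ 2 <= sqnorm u * sqnorm v.
Proof.
move=> hu hv; have [v0|v_neq0] := eqVneq (sqnorm v) 0.
  by rewrite v0 (sqnorm_eq0 hv v0) ip0r // expr0n mulr0.
have v_gt0 : 0 < sqnorm v by rewrite lt0r v_neq0 sqnorm_ge0.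
set r := re (ip u v); set t := r / sqnorm v.
(* expand [0 <= ||u - t v||^2] with [t = Re <u, v> / ||v||^2] *)
have := sqnorm_ge0 (hsB hu (hsZ t%:C hv)).
rewrite sqnormB ?sqnormZ ?re_ipZr //; last exact: hsZ.
rewrite /sqmod /= -/r expr0n /= addr0 mul0r addr0 => h.
have tv : t * sqnorm v = r by rewrite divfK.
have : 0 <= (sqnorm u + t ^+ 2 * sqnorm v - 2 * (t * r)) * sqnorm v.
  by rewrite mulr_ge0 // ltW.
suff -> : (sqnorm u + t ^+ 2 * sqnorm v - 2 * (t * r)) * sqnorm v
        = sqnorm u * sqnorm v - r ^+ 2 by rewrite subr_ge0.
by rewrite -tv; ring.
Qed.

Lemma cauchy_schwarz u v : hs u -> hs v -> sqmod (ip u v) <= sqnorm u * sqnorm v.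
Proof.
move=> hu hv; set z := ip u v.
have := re_ip_sqr_le hu (hsZ z hv); rewrite sqnormZ // ipZr // mulJc /=.
have := sqnorm_ge0 hu; have := sqnorm_ge0 hv.
have [->|z_neq0] := eqVneq (sqmod z) 0; first by move=> ? ? _; rewrite mulr_ge0.
have z_gt0 : 0 < sqmod z by rewrite lt0r z_neq0 sqmod_ge0.
by move=> ? ? h; nra.
Qed.

Lemma sqmod_eval_le u x : hs u -> sqmod (u x) <= sqnorm u * sqnorm (kern H x).
Proof. by move=> hu; rewrite (reproducing x hu); apply: cauchy_schwarz => //; apply: kern_hs. Qed.

Lemma hnorm_lt u (e : R) : hs u -> 0 < e -> (hnorm H u < e%:C) = (sqnorm u < e ^+ 2).
Proof.
move=> hu e_gt0; rewrite /hnorm ip_sqnorm // -{1}(@sqrCK _ e%:C) ?ler0c ?ltW //.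
rewrite ltr_sqrtC ?nnegrE ?ler0c ?sqnorm_ge0 // ?exprn_ge0 ?ler0c ?ltW //.
by rewrite -rmorphXn ltcR.
Qed.

Lemma hnorm_le u v : hs u -> hs v -> hnorm H u <= hnorm H v -> sqnorm u <= sqnorm v.
Proof.
by move=> hu hv; rewrite /hnorm !ip_sqnorm // ler_sqrtC ?nnegrE ?ler0c ?sqnorm_ge0 // lecR.
Qed.

Definition hs_cvg (u : nat -> X -> R[i]) l : Prop :=
  forall e : R, 0 < e -> exists N, forall n, (N <= n)%N -> sqnorm (fsub l (u n)) < e.

Definition hs_cauchy (u : nat -> X -> R[i]) : Prop :=
  forall e : R, 0 < e -> exists N, forall m n, (N <= m)%N -> (N <= n)%N ->
    sqnorm (fsub (u m) (u n)) < e.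

Lemma hs_cauchy_cvg (u : nat -> X -> R[i]) : (forall n, hs (u n)) -> hs_cauchy u -> exists2 l, hs l & hs_cvg u l.
Proof.
move=> hu u_cauchy; have [l [hl l_lim]] : exists l, hs l /\ forall e : R, 0 < e ->
    exists N, forall n, (N <= n)%N -> hnorm H (fsub l (u n)) < e%:C.
  apply: hs_complete => // e e_gt0.
  have [N hN] := u_cauchy _ (exprn_gt0 2 e_gt0).
  by exists N => m n hm hn; rewrite -/(hnorm H _) hnorm_lt ?hN //; apply: hsB.
exists l => // e e_gt0; have sqrt_e_gt0 : 0 < Num.sqrt e by rewrite sqrtr_gt0.
have [N hN] := l_lim _ sqrt_e_gt0; exists N => n hn.
by have := hN n hn; rewrite hnorm_lt ?sqr_sqrtr ?ltW //; apply: hsB.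
Qed.

Lemma hs_cauchy_of_nonincreasing (u : nat -> X -> R[i]) (a : nat -> R) :
  (forall n, hs (u n)) -> (forall n, 0 <= a n) ->
  (forall n m, (n <= m)%N -> sqnorm (fsub (u n) (u m)) <= a n - a m) ->
  hs_cauchy u.
Proof.
move=> hu a_ge0 dist_le e e_gt0.
have a_nonincr n m : (n <= m)%N -> a m <= a n.
  move=> nm; have := dist_le _ _ nm; have := sqnorm_ge0 (hsB (hu n) (hu m)); lra.
have [N hN] := nonincreasing_cauchy a_ge0 a_nonincr e_gt0.
exists N => m n Nm Nn; have [mn|nm] := leqP m n.
  by apply: le_lt_trans (dist_le _ _ mn) _; apply: hN; rewrite Nm.
rewrite sqnormBC //; apply: le_lt_trans (dist_le _ _ (ltnW nm)) _.
by apply: hN; rewrite Nn ltnW.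
Qed.

Lemma hs_cvg_eval0 (u : nat -> X -> R[i]) l x : (forall n, hs (u n)) -> hs l -> hs_cvg u l ->
  (forall e : R, 0 < e -> exists N, forall n, (N <= n)%N -> sqmod (u n x) < e) ->
  l x = 0.
Proof.
move=> hu hl l_lim ux_lim; apply: sqmod_eq0; apply/eqP.
rewrite eq_le sqmod_ge0 andbT; apply/ler_addgt0Pr => e e_gt0; rewrite add0r.
pose K := sqnorm (kern H x) + 1.
have K_gt0 : 0 < K by have := sqnorm_ge0 (kern_hs H x); rewrite /K; lra.
have [N1 hN1] := l_lim _ (divr_gt0 e_gt0 (mulr_gt0 (ltr0Sn R 3) K_gt0)).
have [N2 hN2] := ux_lim _ (divr_gt0 e_gt0 (ltr0Sn R 3)).
pose n := maxn N1 N2; have hln := hsB hl (hu n).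
have := hN1 n (leq_maxl _ _); have := hN2 n (leq_maxr _ _).
have := sqmod_eval_le x hln; have := sqmodD_le (fsub l (u n) x) (u n x).
rewrite /fsub subrK -/(fsub l (u n) x).
have := sqnorm_ge0 hln; have := sqnorm_ge0 (kern_hs H x).
have eK : e / (4%:R * K) * K = e / 4%:R by field; rewrite gt_eqF.
have e4 : e / 4%:R * 4%:R = e by rewrite divfK // pnatr_eq0.
move: eK e4; set s := sqnorm (fsub l (u n)); set k := sqnorm (kern H x).
set p := e / (4%:R * K); set q := e / 4%:R; rewrite /K => eK e4 k0 s0 h1 h2 h3 h4.
have : s * k <= p * (k + 1) by apply: ler_pM => //; [lra | lra].
nra.
Qed.

Lemma sqnorm_le_of_cvg (u : nat -> X -> R[i]) l (c : R) :
  (forall n, hs (u n)) -> hs l -> hs_cvg u l -> 0 <= c ->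
  (forall e : R, 0 < e -> exists N, forall n, (N <= n)%N -> sqnorm (u n) < c + e) ->
  sqnorm l <= c.
Proof.
move=> hu hl l_lim c_ge0 u_le; apply/ler_addgt0Pr => e e_gt0.
pose K := c + 1; have K_gt0 : 0 < K by rewrite /K; lra.
pose d := Num.min 1 (Num.min (e / 3%:R) (e ^+ 2 / (36%:R * K))).
have d_gt0 : 0 < d by rewrite !lt_min ltr01 !divr_gt0 ?exprn_gt0 ?mulr_gt0.
have d_le1 : d <= 1 by rewrite ge_min lexx.
have d_le_e : d <= e / 3%:R by rewrite !ge_min lexx orbT.
have Kd_le : K * d <= (e / 6%:R) ^+ 2.
  have : d <= e ^+ 2 / (36%:R * K) by rewrite !ge_min lexx !orbT.
  have -> : (e / 6%:R) ^+ 2 = K * (e ^+ 2 / (36%:R * K)) by field; rewrite gt_eqF.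
  by rewrite ler_pM2l.
have [N1 hN1] := l_lim _ d_gt0; have [N2 hN2] := u_le _ d_gt0.
pose n := maxn N1 N2; have hln := hsB hl (hu n).
have := hN1 n (leq_maxl _ _); have := hN2 n (leq_maxr _ _).
(* [l = u n + (l - u n)], and the cross term is controlled by Cauchy-Schwarz *)
have := sqnormD (hu n) hln; have := re_ip_sqr_le (hu n) hln.
have -> : fadd (u n) (fsub l (u n)) = l.
  by apply: funext => x; rewrite /fadd /fsub addrC subrK.
have := sqnorm_ge0 (hu n); have := sqnorm_ge0 hln.
set a := sqnorm (u n); set b := sqnorm (fsub l (u n)); set r := re _.
move=> b_ge0 a_ge0 r_sqr -> a_lt b_lt.
have : r ^+ 2 <= (e / 6%:R) ^+ 2.
  apply: (le_trans r_sqr); apply: le_trans Kd_le.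
  by apply: ler_pM => //; rewrite /K; lra.
have e6 : e / 6%:R * 6%:R = e by rewrite divfK // pnatr_eq0.
have e3 : e / 3%:R * 3%:R = e by rewrite divfK // pnatr_eq0.
move: e6 e3; set p := e / 6%:R; set q := e / 3%:R => e6 e3.
have p_ge0 : 0 <= p by lra.
move=> r_sqr_le; have r_le : r <= p by nra.
lra.
Qed.

Lemma min_norm_orthogonal v z : hs v -> hs z ->
  (forall a, sqnorm v <= sqnorm (fadd v (fscale a z))) -> ip z v = 0.
Proof.
move=> hv hz v_min.
have re_eq0 a : re (ip v (fscale a z)) = 0.
  have hza := hsZ a hz; set r := re (ip v (fscale a z)).
  have := sqnorm_ge0 hza; set s := sqnorm (fscale a z) => s_ge0.
  pose t : R := - r / (s + 1).
  have := v_min (t%:C * a); rewrite sqnormD //; last exact: hsZ.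
  have -> : fscale (t%:C * a) z = fscale t%:C (fscale a z).
    by apply: funext => x; rewrite /fscale mulrA.
  rewrite sqnormZ // (re_ipZr t%:C hv hza) /sqmod /= expr0n /= addr0 mul0r addr0 -/r -/s.
  have ts : t * (s + 1) = - r by rewrite divfK // gt_eqF // ltr_wpDl.
  move=> h; have : 0 <= (t ^+ 2 * s + 2 * (t * r)) * (s + 1) ^+ 2.
    by apply: mulr_ge0; [lra | exact: sqr_ge0].
  have -> : (t ^+ 2 * s + 2 * (t * r)) * (s + 1) ^+ 2
          = (t * (s + 1)) ^+ 2 * s + 2 * (t * (s + 1)) * r * (s + 1) by ring.
  rewrite ts => h2; apply/eqP; rewrite -sqrf_eq0 eq_le sqr_ge0 andbT; nra.
have := re_eq0 1; have := re_eq0 'i.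
rewrite !re_ipZr //= !mul0r !mul1r !add0r !addr0 => im0 re0.
have ipvz0 : ip v z = 0 by apply: complexP.
by rewrite (ip_conj hv hz) ipvz0 conjc0.
Qed.

End InnerProduct.

Section Riesz.
Variables (R : realType) (X : Type) (H : RKHS R X).
Local Notation hs := (hs H).
Local Notation ip := (ip H).
Local Notation sqnorm := (sqnorm H).
Variables (L : (X -> R[i]) -> R[i]) (C : R).
Hypotheses (C_ge0 : 0 <= C)
  (LD : forall f g, hs f -> hs g -> L (fadd f g) = L f + L g)
  (LZ : forall a f, hs f -> L (fscale a f) = a * L f)
  (L_bounded : forall g, hs g -> sqmod (L g) <= C * sqnorm g).

Lemma functionalB f g : hs f -> hs g -> L (fsub f g) = L f - L g.
Proof. by move=> hf hg; rewrite fsubE LD ?LZ ?mulN1r //; apply: hsZ. Qed.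

Lemma functional_cvg (u : nat -> X -> R[i]) l a :
  (forall n, hs (u n)) -> hs l -> hs_cvg H u l -> (forall n, L (u n) = a) -> L l = a.
Proof.
move=> hu hl l_lim La; apply/eqP; rewrite -subr_eq0; apply/eqP/sqmod_eq0/eqP.
rewrite eq_le sqmod_ge0 andbT; apply/ler_addgt0Pr => e e_gt0; rewrite add0r.
have C1_gt0 : 0 < C + 1 := ltr_wpDl C_ge0 ltr01.
have [N hN] := l_lim _ (divr_gt0 e_gt0 C1_gt0).
have := L_bounded (hsB hl (hu N)); rewrite functionalB // La.
have := hN N (leqnn N); have := sqnorm_ge0 (hsB hl (hu N)).
set s := sqnorm _ => s_ge0 s_lt h; apply: le_trans h _.
have Ce : C * (e / (C + 1)) <= e by rewrite mulrA ler_pdivrMr // mulrDr mulr1; lra.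
by apply: le_trans Ce; apply: ler_wpM2l => //; apply: ltW.
Qed.

Definition on_level v := hs v /\ L v = 1.

Lemma on_level_midpoint v w : on_level v -> on_level w ->
  on_level (fscale (2^-1)%:C (fadd v w)).
Proof.
move=> [hv Lv] [hw Lw]; split; first by apply/hsZ/hsD.
rewrite LZ ?LD ?Lv ?Lw //; last exact: hsD.
by rewrite -[1 + 1]/(2%:R) -rmorphMn /= -rmorphM mulVf ?pnatr_eq0 // rmorph1.
Qed.

Lemma exists_min_norm_on_level : (exists2 u, hs u & L u <> 0) ->
  exists2 v, on_level v & forall w, on_level w -> sqnorm v <= sqnorm w.
Proof.
move=> [u hu Lu_neq0].
have level_u : on_level (fscale (L u)^-1 u).
  by split; [exact: hsZ | rewrite LZ // mulVf //; apply/eqP].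
pose S : set R := [set t | exists2 v, on_level v & t = sqnorm v].
have S_lb : has_lbound S by exists 0 => t [v [hv _] ->]; apply: sqnorm_ge0.
have S_inf : has_inf S by split => //; exists (sqnorm (fscale (L u)^-1 u)), (fscale (L u)^-1 u).
pose d := inf S.
have d_le w : on_level w -> d <= sqnorm w by move=> lw; apply: ge_inf => //; exists w.
have d_ge0 : 0 <= d by apply: lb_le_inf; [case: S_inf | move=> t [v [hv _] ->]; apply: sqnorm_ge0].
have /choice [vs vs_min] : forall n, exists v, on_level v /\ sqnorm v < d + n.+1%:R^-1.
  move=> n.
  have inv_gt0 : 0 < n.+1%:R^-1 :> R by rewrite invr_gt0.
  have [t [v lv ->] lt] := inf_adherent inv_gt0 S_inf.
  by exists v.
have hvs n : hs (vs n) by case: (vs_min n) => [[]].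
(* the parallelogram law and [||vm + vn||^2 >= 4 d] make a minimizing sequence Cauchy *)
have vs_cauchy : hs_cauchy H vs.
  move=> e e_gt0; have [N hN] := inv_succ_lt (divr_gt0 e_gt0 (ltr0Sn R 3)).
  exists N => m n Nm Nn.
  have [lm lt_m] := vs_min m; have [ln lt_n] := vs_min n.
  have mid_ge : 4 * d <= sqnorm (fadd (vs m) (vs n)).
    have := d_le _ (on_level_midpoint lm ln); rewrite sqnormZ; last exact: hsD.
    rewrite /sqmod /= expr0n /= addr0 => /(ler_wpM2l (ler0n R 4)).
    have -> : 4 * ((2^-1) ^+ 2 * sqnorm (fadd (vs m) (vs n))) = sqnorm (fadd (vs m) (vs n)).
      by rewrite mulrA expr2; field.
    by [].
  have := parallelogram (hvs m) (hvs n); have := hN m Nm; have := hN n Nn.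
  have e4 : e / 4%:R * 4%:R = e by rewrite divfK // pnatr_eq0.
  move: e4 lt_m lt_n mid_ge; set p := e / 4%:R; set x := n.+1%:R^-1; set y := m.+1%:R^-1.
  lra.
have [v hv v_lim] := hs_cauchy_cvg hvs vs_cauchy.
exists v.
  by split => //; apply: functional_cvg v_lim _ => // n; case: (vs_min n) => [[]].
move=> w lw; apply: le_trans (d_le _ lw).
apply: (sqnorm_le_of_cvg hvs hv v_lim d_ge0) => e e_gt0.
have [N hN] := inv_succ_lt e_gt0; exists N => n Nn.
by apply: lt_le_trans (proj2 (vs_min n)) _; rewrite lerD2l ltW // hN.
Qed.

Lemma riesz : exists2 y, hs y & forall g, hs g -> L g = ip g y.
Proof.
have [[u hu Lu_neq0]|L_eq0] := pselect (exists2 u, hs u & L u <> 0); last first.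
  exists (@fzero R X) => [|g hg]; first exact: hs0.
  by rewrite ip0r //; apply: contrapT => Lg_neq0; apply: L_eq0; exists g.
have [v [hv Lv] v_min] := exists_min_norm_on_level (ex_intro2 _ _ u hu Lu_neq0).
have ker_orth z : hs z -> L z = 0 -> ip z v = 0.
  move=> hz Lz; apply: min_norm_orthogonal => // a; apply: v_min.
  by split; [apply/hsD/hsZ | rewrite LD ?LZ ?Lz ?mulr0 ?addr0 //; exact: hsZ].
have v_neq0 : sqnorm v != 0.
  apply/eqP => /(sqnorm_eq0 hv) v0; move: Lv; rewrite v0.
  have -> : @fzero R X = fscale 0 (@fzero R X).
    by apply: funext => x; rewrite /fscale mul0r.
  by rewrite LZ ?mul0r; [move/eqP; rewrite eq_sym oner_eq0 | exact: hs0].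
exists (fscale (sqnorm v)^-1%:C v) => [|g hg]; first exact: hsZ.
(* [g - L g v] lies in the kernel of [L] *)
have hz : hs (fsub g (fscale (L g) v)) by apply/hsB/hsZ.
have := ker_orth _ hz; rewrite functionalB ?LZ ?Lv ?mulr1 ?subrr //; last exact: hsZ.
move=> /(_ erefl); rewrite ipBl ?ipZ ?ip_sqnorm //; last exact: hsZ.
move=> /eqP; rewrite subr_eq0 => /eqP ipgv.
by rewrite ipZr // ipgv conjc_real mulrCA -rmorphM mulVf // mulr1.
Qed.
End Riesz.

Section Multipliers.
Variables (R : realType) (X : Type) (H : RKHS R X).
Local Notation hs := (hs H).
Local Notation ip := (ip H).
Local Notation sqnorm := (sqnorm H).
Implicit Types (phi psi f g h y : X -> R[i]).

Lemma mult_ball_hs phi g : mult_ball H phi -> hs g -> hs (fmul phi g).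
Proof. by move=> phi_mb hg; case: (phi_mb g hg). Qed.

Lemma mult_ball_sqnorm phi g : mult_ball H phi -> hs g -> sqnorm (fmul phi g) <= sqnorm g.
Proof. by move=> phi_mb hg; case: (phi_mb g hg) => hpg; apply: hnorm_le. Qed.

Lemma fmulD phi f g : fmul phi (fadd f g) = fadd (fmul phi f) (fmul phi g).
Proof. by apply: funext => x; rewrite /fmul /fadd mulrDr. Qed.

Lemma fmulZ phi a f : fmul phi (fscale a f) = fscale a (fmul phi f).
Proof. by apply: funext => x; rewrite /fmul /fscale mulrCA. Qed.

Lemma fmulB phi f g : fmul phi (fsub f g) = fsub (fmul phi f) (fmul phi g).
Proof. by apply: funext => x; rewrite /fmul /fsub mulrBr. Qed.

Lemma fmulA phi psi g : fmul (fmul phi psi) g = fmul phi (fmul psi g).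
Proof. by apply: funext => x; rewrite /fmul mulrA. Qed.

Lemma fmul1 g : fmul (fun _ => 1) g = g.
Proof. by apply: funext => x; rewrite /fmul mul1r. Qed.

Lemma mult_ball1 : mult_ball H (fun _ => 1).
Proof. by move=> g hg; rewrite fmul1. Qed.

Lemma mult_ballM phi psi : mult_ball H phi -> mult_ball H psi -> mult_ball H (fmul phi psi).
Proof.
move=> phi_mb psi_mb g hg; rewrite fmulA.
have [hpg pg_le] := psi_mb g hg; have [hppg ppg_le] := phi_mb _ hpg.
by split => //; apply: le_trans ppg_le pg_le.
Qed.

Lemma ip_rep_inj y1 y2 : hs y1 -> hs y2 -> (forall g, hs g -> ip g y1 = ip g y2) -> y1 = y2.
Proof.
move=> hy1 hy2 ip_eq; have hy := hsB hy1 hy2.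
have /(sqnorm_eq0 hy) y0 : sqnorm (fsub y1 y2) = 0 by rewrite /sqnorm ipBr // ip_eq // subrr.
apply: funext => x; apply/eqP; rewrite -subr_eq0; apply/eqP.
exact: (congr1 (fun u => u x) y0).
Qed.

(* [madj] is a choice; its specification holds because the bounded functional
   [g |-> <phi g, h>] has a Riesz representer. *)
Lemma madjP phi h : mult_ball H phi -> hs h ->
  hs (madj H phi h) /\ forall g, hs g -> ip (fmul phi g) h = ip g (madj H phi h).
Proof.
move=> phi_mb hh; apply: (epsilon_spec (inhabits (@fzero R X))
  (fun y => hs y /\ forall g, hs g -> ip (fmul phi g) h = ip g y)).
have [|f g hf hg|a f hf|g hg|y hy y_rep] := @riesz R X H (fun g => ip (fmul phi g) h) (sqnorm h).
- exact: sqnorm_ge0.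
- by rewrite fmulD ipD //; apply: mult_ball_hs.
- by rewrite fmulZ ipZ //; apply: mult_ball_hs.
- apply: (le_trans (cauchy_schwarz (mult_ball_hs phi_mb hg) hh)).
  by rewrite mulrC ler_wpM2l ?sqnorm_ge0 ?mult_ball_sqnorm.
- by exists y.
Qed.

Lemma madj_hs phi h : mult_ball H phi -> hs h -> hs (madj H phi h).
Proof. by move=> phi_mb hh; case: (madjP phi_mb hh). Qed.

Lemma madj_unique phi h y : mult_ball H phi -> hs h -> hs y ->
  (forall g, hs g -> ip (fmul phi g) h = ip g y) -> madj H phi h = y.
Proof.
move=> phi_mb hh hy y_rep; have [hm m_rep] := madjP phi_mb hh.
by apply: ip_rep_inj => // g hg; rewrite -m_rep // y_rep.
Qed.

Lemma madj_sqnorm_le phi h : mult_ball H phi -> hs h -> sqnorm (madj H phi h) <= sqnorm h.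
Proof.
move=> phi_mb hh; have [hy y_rep] := madjP phi_mb hh; set y := madj H phi h in hy y_rep *.
(* [||y||^4 = |<phi y, h>|^2 <= ||phi y||^2 ||h||^2 <= ||y||^2 ||h||^2] *)
have := cauchy_schwarz (mult_ball_hs phi_mb hy) hh.
rewrite y_rep // ip_sqnorm // /sqmod /= expr0n /= addr0.
have := mult_ball_sqnorm phi_mb hy; have := sqnorm_ge0 hy; have := sqnorm_ge0 hh.
set p := sqnorm y; set q := sqnorm h; set s := sqnorm (fmul phi y) => q_ge0 p_ge0 s_le le_sq.
have : p ^+ 2 <= p * q by apply: (le_trans le_sq); apply: ler_wpM2r.
nra.
Qed.
End Multipliers.

Lemma Phi0 (R : realType) (X : Type) (psi : nat -> X -> R[i]) : Phi psi 0 = fun _ => 1.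
Proof. by apply: funext => x; rewrite /Phi big_ord0. Qed.

Lemma PhiS (R : realType) (X : Type) (psi : nat -> X -> R[i]) n :
  Phi psi n.+1 = fmul (Phi psi n) (psi n).
Proof. by apply: funext => x; rewrite /Phi /fmul big_ord_recr. Qed.

Lemma PhiD (R : realType) (X : Type) (psi : nat -> X -> R[i]) n k :
  Phi psi (n + k) = fmul (Phi psi n) (Phi (fun i => psi (n + i)%N) k).
Proof. by apply: funext => x; rewrite /Phi /fmul big_split_ord. Qed.

Lemma mult_ball_Phi (R : realType) (X : Type) (H : RKHS R X) (psi : nat -> X -> R[i]) n :
  (forall i, mult_ball H (psi i)) -> mult_ball H (Phi psi n).
Proof.
move=> psi_mb; elim: n => [|n IH]; first by rewrite Phi0; apply: mult_ball1.
by rewrite PhiS; apply: mult_ballM.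
Qed.

Section Remainder.
Variables (R : realType) (X : Type) (H : RKHS R X).
Local Notation hs := (hs H).
Local Notation ip := (ip H).
Local Notation sqnorm := (sqnorm H).
Variables (phi : nat -> X -> R[i]) (f : X -> R[i]).
Hypotheses (phi_mb : forall n, mult_ball H (phi n)) (hf : hs f).

Definition adjPhi n := madj H (Phi phi n) f.

Definition remainder n := fmul (Phi phi n) (adjPhi n).

Lemma adjPhi_hs n : hs (adjPhi n).
Proof. exact: madj_hs (mult_ball_Phi n phi_mb) hf. Qed.

Lemma remainder_hs n : hs (remainder n).
Proof. exact: mult_ball_hs (mult_ball_Phi n phi_mb) (adjPhi_hs n). Qed.

Lemma adjPhi0 : adjPhi 0 = f.
Proof. by rewrite /adjPhi Phi0; apply: madj_unique => // [|g hg]; rewrite ?fmul1 //; apply: mult_ball1. Qed.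

Lemma adjPhiS n : adjPhi n.+1 = madj H (phi n) (adjPhi n).
Proof.
apply: madj_unique; [exact: mult_ball_Phi | exact: hf | exact: madj_hs (adjPhi_hs n) |].
move=> g hg; have [_ adj_n] := madjP (mult_ball_Phi n phi_mb) hf.
have [_ adj_phi] := madjP (phi_mb n) (adjPhi_hs n).
by rewrite PhiS fmulA adj_n ?adj_phi //; apply: mult_ball_hs.
Qed.

(* [Phi_n Q_(phi n) g_n = Phi_n g_n - Phi_(n+1) g_(n+1)] with [g_n = adjPhi n] *)
Lemma psum_telescope n : psum H phi f n = fsub f (remainder n).
Proof.
elim: n => [|n IH]; apply: funext => x.
  by rewrite /psum big_ord0 /remainder adjPhi0 Phi0 /fsub /fmul mul1r subrr.
have := congr1 (fun u => u x) IH; rewrite /psum big_ord_recr /= => ->.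
by rewrite /remainder adjPhiS PhiS /fsub /fmul /Qop /fsub /fmul -/(adjPhi n); ring.
Qed.

Lemma adjPhi_sqnorm_le n m : (n <= m)%N -> sqnorm (adjPhi m) <= sqnorm (adjPhi n).
Proof.
move=> /subnK <-; elim: (m - n)%N => [|k IH]; first by rewrite add0n.
by rewrite addSn adjPhiS; apply: le_trans (madj_sqnorm_le _ _) IH => //; apply: adjPhi_hs.
Qed.

(* Write [Phi_m = Phi_n psi] for the product [psi] of [phi_n, ..., phi_(m-1)]:
   then [<psi g_m, g_n> = <Phi_m g_m, f> = ||g_m||^2]. *)
Lemma remainder_dist_le n m : (n <= m)%N ->
  sqnorm (fsub (remainder n) (remainder m)) <= sqnorm (adjPhi n) - sqnorm (adjPhi m).
Proof.
move=> nm; rewrite -(subnK nm) addnC; move: (m - n)%N => k {nm m}; set m := (n + k)%N.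
pose psi := Phi (fun i => phi (n + i)%N) k.
have psi_mb : mult_ball H psi by apply: mult_ball_Phi.
have hgm := adjPhi_hs m; have hgn := adjPhi_hs n; have hpsi := mult_ball_hs psi_mb hgm.
have rem_m : remainder m = fmul (Phi phi n) (fmul psi (adjPhi m)) by rewrite /remainder PhiD fmulA.
rewrite rem_m /remainder -fmulB.
apply: (le_trans (mult_ball_sqnorm (mult_ball_Phi n phi_mb) (hsB hgn hpsi))).
have cross : re (ip (adjPhi n) (fmul psi (adjPhi m))) = sqnorm (adjPhi m).
  have [_ adj_n] := madjP (mult_ball_Phi n phi_mb) hf.
  have [_ adj_m] := madjP (mult_ball_Phi m phi_mb) hf.
  by rewrite re_ipC // -adj_n // -rem_m adj_m.
rewrite sqnormB // cross; have := mult_ball_sqnorm psi_mb hgm; lra.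
Qed.

Lemma remainder_cauchy : hs_cauchy H remainder.
Proof.
apply: hs_cauchy_of_nonincreasing remainder_hs _ remainder_dist_le.
by move=> n; apply: sqnorm_ge0; apply: adjPhi_hs.
Qed.

Lemma remainder_eval_cvg0 x :
  (forall e : R, 0 < e -> exists N, forall n, (N <= n)%N -> `|Phi phi n x| < e%:C) ->
  forall e : R, 0 < e -> exists N, forall n, (N <= n)%N -> sqmod (remainder n x) < e.
Proof.
move=> Phi_cvg0 e e_gt0; pose B := sqnorm f * sqnorm (kern H x) + 1.
have fk_ge0 : 0 <= sqnorm f * sqnorm (kern H x).
  by apply: mulr_ge0; apply: sqnorm_ge0 => //; apply: kern_hs.
have B_gt0 : 0 < B by rewrite /B; lra.
have sqrt_gt0 : 0 < Num.sqrt (e / B) by rewrite sqrtr_gt0 divr_gt0.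
have [N hN] := Phi_cvg0 _ sqrt_gt0; exists N => n Nn.
have := sqmod_lt sqrt_gt0 (hN n Nn); rewrite sqr_sqrtr ?divr_ge0 ?ltW // => Phi_lt.
have gn_le : sqmod (adjPhi n x) <= sqnorm f * sqnorm (kern H x).
  apply: le_trans (sqmod_eval_le x (adjPhi_hs n)) _.
  apply: ler_wpM2r; first by apply: sqnorm_ge0; apply: kern_hs.
  by rewrite -{1}adjPhi0; apply: adjPhi_sqnorm_le.
rewrite /remainder /fmul sqmodM.
have eB : e / B * B = e by rewrite divfK // gt_eqF.
have := sqmod_ge0 (Phi phi n x); have := sqmod_ge0 (adjPhi n x).
move: eB Phi_lt gn_le; rewrite /B; set q := e / _; nra.
Qed.
End Remainder.

Theorem theorem2p1 (R : realType) (X : Type) (H : RKHS R X)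
  (phi : nat -> X -> R[i]) :
  (forall n, mult_ball H (phi n)) ->
  (forall x, forall eps : R, 0 < eps ->
     exists N, forall n, (N <= n)%N -> `|Phi phi n x| < eps%:C) ->
  forall f, hs H f ->
    forall eps : R, 0 < eps -> exists N, forall n, (N <= n)%N ->
      hnorm H (fsub f (psum H phi f n)) < eps%:C.
Proof.
move=> phi_mb Phi_cvg0 f hf e e_gt0.
have hrem := remainder_hs phi_mb hf.
have [l hl rem_lim] := hs_cauchy_cvg hrem (remainder_cauchy phi_mb hf).
have l0 : l = @fzero R X.
  apply: funext => x; apply: hs_cvg_eval0 hrem hl rem_lim _.
  exact (remainder_eval_cvg0 phi_mb hf (Phi_cvg0 x)).
have [N hN] := rem_lim _ (exprn_gt0 2 e_gt0); exists N => n Nn.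
have -> : fsub f (psum H phi f n) = remainder H phi f n.
  rewrite psum_telescope //; apply: funext => x.
  by rewrite /fsub opprB addrC subrK.
rewrite hnorm_lt //.
have -> : remainder H phi f n = fsub (remainder H phi f n) l.
  by rewrite l0; apply: funext => x; rewrite /fsub /fzero subr0.
by rewrite sqnormBC // hN.
Qed.
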